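(* Let $\Omega\subset\mathbb H^n$ be an open, horizontally bounded set, $G_0\subset\Omega$ an open (Euclidean) convex set, $\xi_0\in G_0$, and $c_v<c_b\le0$. Let $V:\mathbb R^{2n+1}\to\mathbb R$ be the slicing cone with vertex $(\xi_0,c_v)$ and base $G_0\cap H_{\xi_0}$ with value $c_b$ on $\partial G_0\cap H_{\xi_0}$ (defined in the context). Then: (i) $B_{\mathbb R^{2n}}(0,r_0)\subset\partial_HV(\xi_0)$, where $r_0=\dfrac{c_b-c_v}{\mathrm{diam}_H(G_0\cap H_{\xi_0})}$; (ii) for every $p$ in the interior of $\partial_HV(\xi_0)$, $$V(\xi)>V(\xi_0)+p\cdot(\mathrm{Pr}_1(\xi)-\mathrm{Pr}_1(\xi_0))\qquad\forall\xi\in(\overline{G_0}\cap H_{\xi_0})\setminus\{\xi_0\}.$$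
   Context: $\mathbb H^n=\mathbb C^n\times\mathbb R\cong\mathbb R^{2n+1}$ with real coordinates $(x,y,t)$, $z=x+iy$, group law $(z,t)\circ(z',t')=(z+z',t+t'+2\,\mathrm{Im}\langle z,z'\rangle)$, $\langle z,z'\rangle=\sum_j z_j\overline{z'_j}$. Dilations $\delta_\lambda(z,t)=(\lambda z,\lambda^2t)$. Horizontal plane at $\xi_0=(x_0,y_0,t_0)$: $H_{\xi_0}=\{(x,y,t):t=t_0+2(x\cdot y_0-x_0\cdot y)\}$ (an affine hyperplane of $\mathbb R^{2n+1}$). $\mathrm{Pr}_1(x,y,t)=(x,y)$. Gauge $N(z,t)=(|z|^4+t^2)^{1/4}$, $d_H(\xi,\zeta)=N(\zeta^{-1}\circ\xi)$, $\mathrm{diam}_H$ the $d_H$-diameter; $\Omega$ horizontally bounded means $\sup\{\mathrm{diam}_H(\Omega\cap H_\xi):\xi\in\Omega\}<\infty$. Slicing cone: for $\eta\in H_{\xi_0}\setminus\{\xi_0\}$ let $\eta^\partial$ be the unique point of $\partial G_0\cap H_{\xi_0}$ on the horizontal ray $\{\xi_0\circ\delta_s(\xi_0^{-1}\circ\eta):s>0\}$, and let $\lambda^\eta=N(\xi_0^{-1}\circ\eta)/N(\xi_0^{-1}\circ\eta^\partial)$ (so $\eta=\xi_0\circ\delta_{\lambda^\eta}(\xi_0^{-1}\circ\eta^\partial)$); set $\lambda^{\xi_0}=0$. For $\xi\in\mathbb R^{2n+1}$ let $\xi^\perp$ be the Euclidean orthogonal projection of $\xi$ onto $H_{\xi_0}$,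 and define $V(\xi)=c_v\bigl(1-(1-\tfrac{c_b}{c_v})\lambda^{\xi^\perp}\bigr)$. Horizontal subdifferential of $V$ (restricted to $\Omega$) at $\xi_0$: $\partial_HV(\xi_0)=\{p\in\mathbb R^{2n}:V(\xi)\ge V(\xi_0)+p\cdot(\mathrm{Pr}_1(\xi)-\mathrm{Pr}_1(\xi_0))\ \forall\xi\in\Omega\cap H_{\xi_0}\}$. *)

(* Points of H^n = R^(2n+1) are triples (x, y, t)
   with x, y : 'rV[R]_n and t : R; topology = product topology (= Euclidean). *)
From HB Require Import structures.
From mathcomp Require Import all_boot all_order all_algebra.
From mathcomp Require Import all_classical all_reals all_analysis.
Set Implicit Arguments. Unset Strict Implicit. Unset Printing Implicit Defensive.
Import Order.TTheory GRing.Theory Num.Theory.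
Import numFieldNormedType.Exports.
Local Open Scope classical_set_scope.
Local Open Scope ring_scope.

Notation hpt R n := ('rV[R]_n * 'rV[R]_n * R)%type.

Section Heis.
Variables (R : realType) (n : nat).
Local Notation hpt := (hpt R n).

Definition dotv (u v : 'rV[R]_n) : R := \sum_(i < n) u 0 i * v 0 i.

(* Im <z, z'> with z = x + i y, <z,z'> = sum z_j conj(z'_j) *)
Definition imh (a b : hpt) : R := dotv a.1.2 b.1.1 - dotv a.1.1 b.1.2.

Definition hmul (a b : hpt) : hpt :=
  (a.1.1 + b.1.1, a.1.2 + b.1.2, a.2 + b.2 + 2 * imh a b).
Definition hinv (a : hpt) : hpt := (- a.1.1, - a.1.2, - a.2).
Definition hdil (l : R) (a : hpt) : hpt := (l *: a.1.1, l *: a.1.2, l ^+ 2 * a.2).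

Definition gauge (a : hpt) : R :=
  Num.sqrt (Num.sqrt ((dotv a.1.1 a.1.1 + dotv a.1.2 a.1.2) ^+ 2 + a.2 ^+ 2)).
Definition dH (a b : hpt) : R := gauge (hmul (hinv b) a).
Definition diamH (S : set hpt) : R :=
  sup [set r | exists a b, S a /\ S b /\ r = dH a b].

Definition hplane (a0 : hpt) : set hpt :=
  [set a | a.2 = a0.2 + 2 * (dotv a.1.1 a0.1.2 - dotv a0.1.1 a.1.2)].

Definition horiz_bounded (Om : set hpt) : Prop :=
  exists M : R, forall xi, Om xi -> forall a b,
    (Om `&` hplane xi) a -> (Om `&` hplane xi) b -> dH a b <= M.

Definition padd (a b : hpt) : hpt := (a.1.1 + b.1.1, a.1.2 + b.1.2, a.2 + b.2).
Definition pscale (s : R) (a : hpt) : hpt := (s *: a.1.1, s *: a.1.2, s * a.2).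
Definition edot (a b : hpt) : R := dotv a.1.1 b.1.1 + dotv a.1.2 b.1.2 + a.2 * b.2.

Definition econvex (A : set hpt) : Prop :=
  forall a b, A a -> A b -> forall s : R, 0 <= s <= 1 ->
    A (padd (pscale (1 - s) a) (pscale s b)).

Definition boundary (A : set hpt) : set hpt := closure A `\` interior A.

Definition proj_hyp (nu : hpt) (c : R) (a : hpt) : hpt :=
  padd a (pscale (- ((edot nu a - c) / edot nu nu)) nu).
(* H_{xi0} = {v | nu0.v = t0} with Euclidean normal nu0 = (-2 y0, 2 x0, 1) *)
Definition hnormal (a0 : hpt) : hpt := (- (2 *: a0.1.2), 2 *: a0.1.1, 1).
Definition projH (a0 a : hpt) : hpt := proj_hyp (hnormal a0) a0.2 a.

Definition hray (a0 eta : hpt) : set hpt :=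
  [set z | exists s : R, 0 < s /\ z = hmul a0 (hdil s (hmul (hinv a0) eta))].

Definition etab (G0 : set hpt) (a0 eta : hpt) : hpt :=
  xget a0 (boundary G0 `&` hplane a0 `&` hray a0 eta).

Definition lam (G0 : set hpt) (a0 eta : hpt) : R :=
  if eta == a0 then 0
  else gauge (hmul (hinv a0) eta) / gauge (hmul (hinv a0) (etab G0 a0 eta)).

Definition slicing_cone (G0 : set hpt) (a0 : hpt) (cv cb : R) (a : hpt) : R :=
  cv * (1 - (1 - cb / cv) * lam G0 a0 (projH a0 a)).

Definition hpair (p : 'rV[R]_n * 'rV[R]_n) (a a0 : hpt) : R :=
  dotv p.1 (a.1.1 - a0.1.1) + dotv p.2 (a.1.2 - a0.1.2).

Definition hsubdiff (Om : set hpt) (f : hpt -> R) (a0 : hpt)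
  : set ('rV[R]_n * 'rV[R]_n) :=
  [set p | forall a, Om a -> hplane a0 a -> f a0 + hpair p a a0 <= f a].

Definition ball2n (r : R) : set ('rV[R]_n * 'rV[R]_n) :=
  [set p | Num.sqrt (dotv p.1 p.1 + dotv p.2 p.2) < r].

End Heis.

From HB Require Import structures.
From mathcomp Require Import all_boot all_order all_algebra.
From mathcomp Require Import all_classical all_reals all_analysis.
From mathcomp Require Import ring lra.
Set Implicit Arguments. Unset Strict Implicit. Unset Printing Implicit Defensive.
Import Order.TTheory GRing.Theory Num.Theory.
Import numFieldNormedType.Exports.
Local Open Scope classical_set_scope.
Local Open Scope ring_scope.

(* On the horizontal plane H through xi0 the chart v |-> xi0 o (v, 0) is affine, so
   Euclidean convexity of G0 and horizontal rays from xi0 become ordinary convexity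
   and rays in R^2n, while d_H(chart v, xi0) = |v|.  If rho(v) is the radial function
   of G0 at xi0 in the direction v, the boundary point of the ray is chart(rho(v) v)
   and the slicing cone reads V(chart v) = c_v + (c_b - c_v) / rho(v), which is
   positively homogeneous in v.  Part (i) then follows from Cauchy-Schwarz and
   rho(v) |v| <= diam_H(G0 cap H).  For (ii), p + d v is still a subgradient for some
   d > 0; testing it at a point of G0 on the ray gives the strict inequality. *)

Section RadialFunction.
Variables (R : realType) (V : normedModType R) (G : set V) (a : V).
Hypotheses (oG : open G) (Ga : G a)
  (cG : forall x y, G x -> G y -> forall s, 0 <= s <= 1 -> G ((1 - s) *: x + s *: y)).

Let nbhs_open x : G x -> nbhs x G.
Proof. by move=> Gx; move: oG; rewrite openE; apply. Qed.

Lemma open_convex_closure_segment b th : closure G b -> 0 <= th < 1 ->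
  G ((1 - th) *: a + th *: b).
Proof.
move=> clb /andP[th0 th1].
have th1' : 1 - th != 0 by rewrite subr_eq0 gt_eqF.
set c := (1 - th) *: a + th *: b.
pose f y := (1 - th)^-1 *: (c - th *: y).
have fb : f b = a by rewrite /f /c addrK scalerA mulVf // scale1r.
have fK y : (1 - th) *: f y + th *: y = c by rewrite /f scalerA mulfV // scale1r subrK.
have cf : {for b, continuous f}.
  apply: continuousZl_tmp; apply: continuousB; first exact: cst_continuous.
  by apply: continuousZl_tmp; exact: cvg_id.
(* [f] is affine and sends [b] to [a], so points of [G] near [b] are mapped into [G]. *)
have [y [Gy Gfy]] : G `&` (f @^-1` G) !=set0.
  by apply: clb; apply: cf; rewrite fb; exact: nbhs_open.
by rewrite -(fK y); apply: cG => //; rewrite th0 ltW.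
Qed.

Variable w : V.

Definition radial := sup [set s : R | 0 <= s /\ G (a + s *: w)].
Local Notation ray := [set s : R | 0 <= s /\ G (a + s *: w)].

Hypothesis ray_bounded : has_ubound ray.

Let ray_continuous s0 : {for s0, continuous (fun s : R => a + s *: w)}.
Proof.
apply: continuousD; first exact: cst_continuous.
by apply: continuousZr_tmp; exact: cvg_id.
Qed.

Let near_ray s0 : G (a + s0 *: w) ->
  exists2 e, 0 < e & forall s, `|s0 - s| < e -> G (a + s *: w).
Proof.
move=> Gs0; have /nbhs_ballP[e e0 He] := ray_continuous (nbhs_open Gs0).
by exists e => // s s0s; apply: He; rewrite -ball_normE.
Qed.

Lemma ray_convex th s : (1 - th) *: a + th *: (a + s *: w) = a + (th * s) *: w.
Proof. by rewrite scalerDr addrA -scalerDl subrK scale1r scalerA. Qed.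

Let ray_has_sup : has_sup ray.
Proof. by split => //; exists 0; split => //; rewrite scale0r addr0. Qed.

Lemma le_radial s : 0 <= s -> G (a + s *: w) -> s <= radial.
Proof. by move=> s0 Gs; apply: sup_upper_bound. Qed.

Lemma radial_gt0 : 0 < radial.
Proof.
have G0a : G (a + 0 *: w) by rewrite scale0r addr0.
have [e e0 He] := near_ray G0a.
have e20 : 0 < e / 2 by rewrite divr_gt0.
apply: lt_le_trans e20 (le_radial (ltW e20) _); apply: He.
by rewrite sub0r normrN gtr0_norm //; lra.
Qed.

Lemma lt_radial s : 0 <= s -> s < radial -> G (a + s *: w).
Proof.
move=> s0 sr; have rs0 : 0 < radial - s by rewrite subr_gt0.
have [e [e0 Ge] se] := sup_adherent rs0 ray_has_sup.
rewrite opprB addrC subrK in se.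
have e_gt0 : 0 < e by apply: le_lt_trans se.
have := cG Ga Ge (s := s / e); rewrite ray_convex divfK ?gt_eqF //; apply.
by rewrite divr_ge0 ?ler_pdivrMr // mul1r ltW.
Qed.

Lemma radial_notin : ~ G (a + radial *: w).
Proof.
move=> Gr; have [e e0 He] := near_ray Gr.
have e20 : 0 < e / 2 by rewrite divr_gt0.
have : radial + e / 2 <= radial.
  apply: le_radial; first by rewrite addr_ge0 // ltW // radial_gt0.
  by apply: He; rewrite opprD addrA subrr sub0r normrN gtr0_norm //; lra.
lra.
Qed.

Lemma radial_closure : closure G (a + radial *: w).
Proof.
move=> B /ray_continuous /nbhs_ballP[e e0 He].
set m := Num.min radial e.
have m0 : 0 < m by rewrite lt_min radial_gt0 e0.
have mr : m <= radial by rewrite ge_min lexx.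
have me : m <= e by rewrite ge_min lexx orbT.
exists (a + (radial - m / 2) *: w); split; first by apply: lt_radial; lra.
apply: He; rewrite -ball_normE /=.
have -> : radial - (radial - m / 2) = m / 2 by ring.
by rewrite gtr0_norm; lra.
Qed.

Lemma radial_unique s : 0 < s -> closure G (a + s *: w) -> ~ G (a + s *: w) ->
  s = radial.
Proof.
move=> s0 cls nGs; have r0 := radial_gt0.
case: (ltgtP s radial) => // [sr|rs]; first by case: nGs; apply: lt_radial; rewrite ?ltW.
set u := (s + radial) / 2.
have u0 : 0 <= u by rewrite /u; lra.
have : G (a + u *: w).
  have := open_convex_closure_segment cls (th := u / s).
  rewrite ray_convex divfK ?gt_eqF //; apply.
  by rewrite divr_ge0 ?(ltW s0) // ltr_pdivrMr // mul1r /u; lra.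
by move/(le_radial u0); rewrite /u; lra.
Qed.

End RadialFunction.

Section DotProduct.
Variables (R : realType) (n : nat).
Implicit Types (u v w : 'rV[R]_n).

Lemma dotvC u v : dotv u v = dotv v u.
Proof. by apply: eq_bigr => i _; rewrite mulrC. Qed.

Lemma dotvDl u v w : dotv (u + v) w = dotv u w + dotv v w.
Proof. by rewrite /dotv -big_split; apply: eq_bigr => i _; rewrite mxE mulrDl. Qed.

Lemma dotvZl (c : R) u v : dotv (c *: u) v = c * dotv u v.
Proof. by rewrite /dotv mulr_sumr; apply: eq_bigr => i _; rewrite mxE mulrA. Qed.

Lemma dotvDr u v w : dotv w (u + v) = dotv w u + dotv w v.
Proof. by rewrite dotvC dotvDl !(dotvC w). Qed.

Lemma dotvZr (c : R) u v : dotv v (c *: u) = c * dotv v u.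
Proof. by rewrite dotvC dotvZl dotvC. Qed.

Lemma dotvNl u v : dotv (- u) v = - dotv u v.
Proof. by rewrite -scaleN1r dotvZl mulN1r. Qed.

Lemma dotvNr u v : dotv v (- u) = - dotv v u.
Proof. by rewrite dotvC dotvNl dotvC. Qed.

Lemma dotv_ge0 u : 0 <= dotv u u.
Proof. by apply: sumr_ge0 => i _; rewrite -expr2 sqr_ge0. Qed.

Lemma dotv_eq0 u : dotv u u = 0 -> u = 0.
Proof.
move=> /psumr_eq0P u0; apply/matrixP => i j; rewrite ord1 mxE; apply/eqP.
by rewrite -sqrf_eq0 expr2 u0 // => k _; rewrite -expr2 sqr_ge0.
Qed.

End DotProduct.

Section EuclideanPlane.
Variables (R : realType) (n : nat).
Local Notation P := ('rV[R]_n * 'rV[R]_n)%type.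
Implicit Types (p q v : P).

Definition pdot p q : R := dotv p.1 q.1 + dotv p.2 q.2.
Definition pnorm p : R := Num.sqrt (pdot p p).

Lemma pdotC p q : pdot p q = pdot q p.
Proof. by rewrite /pdot dotvC (dotvC p.2). Qed.

Lemma pdotDl p q v : pdot (p + q) v = pdot p v + pdot q v.
Proof. by rewrite /pdot !dotvDl; ring. Qed.

Lemma pdotZl (c : R) p q : pdot (c *: p) q = c * pdot p q.
Proof. by rewrite /pdot !dotvZl mulrDr. Qed.

Lemma pdotDr p q v : pdot v (p + q) = pdot v p + pdot v q.
Proof. by rewrite pdotC pdotDl !(pdotC v). Qed.

Lemma pdotZr (c : R) p q : pdot q (c *: p) = c * pdot q p.
Proof. by rewrite pdotC pdotZl pdotC. Qed.

Lemma pdot_ge0 p : 0 <= pdot p p.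
Proof. by rewrite addr_ge0 ?dotv_ge0. Qed.

Lemma pdot_eq0 p : pdot p p = 0 -> p = 0.
Proof.
move=> /eqP; rewrite paddr_eq0 ?dotv_ge0 // => /andP[/eqP/dotv_eq0 p1 /eqP/dotv_eq0 p2].
by case: p p1 p2 => ? ? /= -> ->.
Qed.

Lemma pnorm_ge0 p : 0 <= pnorm p.
Proof. exact: sqrtr_ge0. Qed.

Lemma sqr_pnorm p : pnorm p ^+ 2 = pdot p p.
Proof. by rewrite sqr_sqrtr // pdot_ge0. Qed.

Lemma pnormZ (c : R) p : 0 <= c -> pnorm (c *: p) = c * pnorm p.
Proof.
move=> c0; rewrite /pnorm pdotZl pdotZr mulrA -expr2.
by rewrite sqrtrM ?sqr_ge0 // sqrtr_sqr ger0_norm.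
Qed.

Lemma pnorm_gt0 p : p != 0 -> 0 < pnorm p.
Proof.
move=> p0; rewrite sqrtr_gt0 lt_neqAle pdot_ge0 andbT eq_sym.
by apply: contra p0 => /eqP/pdot_eq0 ->.
Qed.

Lemma pdot0l q : pdot 0 q = 0.
Proof. by rewrite -(scale0r (0 : P)) pdotZl mul0r. Qed.

Lemma pdot_le_pnorm p q : pdot p q <= pnorm p * pnorm q.
Proof.
(* Expand 0 <= |(|q|) p - (|p|) q|^2 = 2 |p| |q| (|p| |q| - p.q). *)
have [->|p0] := eqVneq p 0; first by rewrite pdot0l mulr_ge0 ?pnorm_ge0.
have [->|q0] := eqVneq q 0; first by rewrite pdotC pdot0l mulr_ge0 ?pnorm_ge0.
have a0 := pnorm_gt0 p0; have b0 := pnorm_gt0 q0.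
have := pdot_ge0 (pnorm q *: p + (- pnorm p) *: q).
rewrite !(pdotDl, pdotDr, pdotZl, pdotZr) (pdotC q p) -!sqr_pnorm => H.
rewrite -subr_ge0 -(pmulr_rge0 _ (mulr_gt0 a0 b0)); lra.
Qed.

End EuclideanPlane.

Section HorizontalChart.
Variables (R : realType) (n : nat) (a0 : hpt R n).
Local Notation P := ('rV[R]_n * 'rV[R]_n)%type.
Local Notation hpt := (hpt R n).
Implicit Types (v : P) (a : hpt).

Definition hcoord a : P := (a.1.1 - a0.1.1, a.1.2 - a0.1.2).
Definition hlift v : hpt := (v.1, v.2, 2 * (dotv a0.1.2 v.1 - dotv a0.1.1 v.2)).
Definition hchart v : hpt := a0 + hlift v.

Lemma hpairE p a : hpair p a a0 = pdot p (hcoord a).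
Proof. by []. Qed.

Lemma hliftZ (s : R) v : hlift (s *: v) = s *: hlift v.
Proof.
rewrite /hlift /= !dotvZr; congr (_, _, _).
by rewrite -mulrBr mulrCA.
Qed.

Lemma hchartZ (s : R) v : hchart (s *: v) = a0 + s *: hlift v.
Proof. by rewrite /hchart hliftZ. Qed.

Lemma hchart0 : hchart 0 = a0.
Proof. by rewrite -(scale0r (0 : P)) hchartZ scale0r addr0. Qed.

Lemma hmul_horizontal v : hmul a0 (v.1, v.2, 0) = hchart v.
Proof. by rewrite /hmul /imh /= addr0. Qed.

Lemma hmul_hinv_hchart v : hmul (hinv a0) (hchart v) = (v.1, v.2, 0).
Proof.
rewrite /hmul /imh /=; congr (_, _, _); rewrite ?addKr //=.
by rewrite !dotvDr !dotvNl (dotvC a0.1.1 a0.1.2); ring.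
Qed.

Lemma gauge_horizontal v : gauge (v.1, v.2, 0) = pnorm v.
Proof. by rewrite /gauge /= expr0n addr0 sqrtr_sqr ger0_norm // pdot_ge0. Qed.

Lemma dH_hchart v : dH (hchart v) a0 = pnorm v.
Proof. by rewrite /dH hmul_hinv_hchart gauge_horizontal. Qed.

Lemma hplane_hchart v : hplane a0 (hchart v).
Proof. by rewrite /hplane /= dotvDl dotvDr (dotvC v.1); ring. Qed.

Lemma hplane_center : hplane a0 a0.
Proof. by have := hplane_hchart 0; rewrite hchart0. Qed.

Lemma hchartK v : hcoord (hchart v) = v.
Proof. by rewrite /hcoord /= ![_ + _ - _]addrC !addKr; case: v. Qed.

Lemma hcoord_center : hcoord a0 = 0.
Proof. by rewrite /hcoord !subrr. Qed.

Lemma hchart_eq_center v : (hchart v == a0) = (v == 0).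
Proof.
apply/eqP/eqP => [/(congr1 hcoord)|->]; last exact: hchart0.
by rewrite hchartK hcoord_center.
Qed.

Lemma hcoordK a : hplane a0 a -> hchart (hcoord a) = a.
Proof.
case: a => [[x y] t]; rewrite /hplane /= => ->; rewrite /hchart /hlift /=; congr (_, _, _).
- by rewrite addrC subrK.
- by rewrite addrC subrK.
by rewrite !dotvDr !dotvNr (dotvC x) (dotvC a0.1.2 a0.1.1) /=; ring.
Qed.

Lemma projH_hplane a : hplane a0 a -> projH a0 a = a.
Proof.
move=> ha; rewrite /projH /proj_hyp.
suff -> : edot (hnormal a0) a - a0.2 = 0.
  by rewrite mul0r oppr0 /pscale /padd /= !scale0r mul0r !addr0; case: a {ha} => [[]].
by rewrite /edot /hnormal /= ha dotvNl !dotvZl (dotvC a0.1.2); ring.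
Qed.

Lemma hray_hchart v z : hray a0 (hchart v) z <-> exists2 s, 0 < s & z = hchart (s *: v).
Proof.
have E s : hmul a0 (hdil s (hmul (hinv a0) (hchart v))) = hchart (s *: v).
  by rewrite hmul_hinv_hchart /hdil mulr0 -hmul_horizontal.
by split => [[s [s0 ->]]|[s s0 ->]]; exists s; rewrite ?E.
Qed.

End HorizontalChart.

Section SlicingCone.
Variables (R : realType) (n : nat) (Om G0 : set (hpt R n)) (a0 : hpt R n) (cv cb : R).
Hypotheses (oG0 : open G0) (cG0 : econvex G0) (G0Om : G0 `<=` Om) (G0a0 : G0 a0)
  (hbOm : horiz_bounded Om) (cv0 : cv != 0) (cvb : cv < cb).
Local Notation P := ('rV[R]_n * 'rV[R]_n)%type.
Local Notation V := (slicing_cone G0 a0 cv cb).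
Local Notation D := (diamH (G0 `&` hplane a0)).
Local Notation hchart := (hchart a0).
Implicit Types (v : P).

Let rho v := radial G0 a0 (hlift a0 v).

Lemma ray_le_diamH v s : 0 <= s -> G0 (hchart (s *: v)) -> s * pnorm v <= D.
Proof.
move=> s0 Gs; rewrite -pnormZ // -(dH_hchart a0); apply: ub_le_sup.
  case: hbOm => M hM; exists M => r [a [b [[Ga Ha] [[Gb Hb] ->]]]].
  by apply: (hM a0 (G0Om G0a0)); split => //; apply: G0Om.
exists (hchart (s *: v)), a0.
by split; [split; [|exact: hplane_hchart] | split; [split; [|exact: hplane_center]|]].
Qed.

Let ray_bounded v : v != 0 -> has_ubound [set s | 0 <= s /\ G0 (a0 + s *: hlift a0 v)].
Proof.
move=> v0; exists (D / pnorm v) => s [s0 Gs].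
by rewrite ler_pdivlMr ?pnorm_gt0 // ray_le_diamH // hchartZ.
Qed.

Lemma rho_gt0 v : v != 0 -> 0 < rho v.
Proof. by move=> v0; apply: radial_gt0 => //; apply: ray_bounded. Qed.

Lemma rho_le_diamH v : v != 0 -> rho v * pnorm v <= D.
Proof.
move=> v0; rewrite -ler_pdivlMr ?pnorm_gt0 //; apply: ge_sup.
  by exists 0; split => //; rewrite scale0r addr0.
by move=> s [s0 Gs]; rewrite ler_pdivlMr ?pnorm_gt0 // ray_le_diamH // hchartZ.
Qed.

Lemma etab_hchart v c : v != 0 -> 0 < c ->
  etab G0 a0 (hchart (c *: v)) = hchart (rho v *: v).
Proof.
move=> v0 c0; have r0 := rho_gt0 v0.
have iG0 : interior G0 = G0 by apply/interior_id.
apply: xget_unique.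
  split; [split|].
  - split; first by rewrite hchartZ; apply: radial_closure => //; apply: ray_bounded.
    by rewrite iG0 hchartZ; apply: radial_notin => //; apply: ray_bounded.
  - exact: hplane_hchart.
  - apply/hray_hchart; exists (rho v / c); first by rewrite divr_gt0.
    by rewrite scalerA divfK ?gt_eqF.
move=> y [[[clG nG] _] /hray_hchart[s s0 ey]]; subst y.
rewrite scalerA in clG nG *; congr (hchart (_ *: v)).
rewrite hchartZ in clG; rewrite iG0 hchartZ in nG.
by apply: (radial_unique _ _ _ (ray_bounded v0)) => //; rewrite mulr_gt0.
Qed.

Lemma lam_hchart v c : v != 0 -> 0 < c -> lam G0 a0 (hchart (c *: v)) = c / rho v.
Proof.
move=> v0 c0; have r0 := rho_gt0 v0; have nv0 := pnorm_gt0 v0.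
rewrite /lam hchart_eq_center scaler_eq0 gt_eqF // (negPf v0) /= etab_hchart //.
rewrite !hmul_hinv_hchart !gauge_horizontal !pnormZ ?ltW //.
by field; rewrite !gt_eqF.
Qed.

Lemma slicing_cone_center : V a0 = cv.
Proof.
rewrite /slicing_cone (projH_hplane (hplane_center _)) /lam.
by case: eqP => [_|//]; rewrite mulr0 subr0 mulr1.
Qed.

Lemma slicing_cone_hchart v c : v != 0 -> 0 < c ->
  V (hchart (c *: v)) = cv + (cb - cv) * (c / rho v).
Proof.
move=> v0 c0; have r0 := rho_gt0 v0.
rewrite /slicing_cone (projH_hplane (hplane_hchart _ _)) lam_hchart //.
by field; rewrite cv0 gt_eqF.
Qed.

Lemma slicing_cone_hplane a : hplane a0 a -> a <> a0 ->
  V a = V a0 + (cb - cv) / rho (hcoord a0 a).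
Proof.
move=> ha /eqP; rewrite -{1}(hcoordK ha) hchart_eq_center => v0.
have := slicing_cone_hchart v0 ltr01; rewrite scale1r hcoordK // => ->.
by rewrite slicing_cone_center mul1r.
Qed.

Lemma ball_sub_hsubdiff : ball2n ((cb - cv) / D) `<=` hsubdiff Om V a0.
Proof.
move=> p hp a _ ha; have [->|ne] := eqVneq a a0.
  by rewrite hpairE hcoord_center pdotC pdot0l addr0.
have v0 : hcoord a0 a != 0 by rewrite -(hchart_eq_center a0) hcoordK.
rewrite (slicing_cone_hplane ha); last exact/eqP.
rewrite hpairE lerD2l; set v := hcoord a0 a in v0 *.
have r0 := rho_gt0 v0; have hD := rho_le_diamH v0.
have D0 : 0 < D := lt_le_trans (mulr_gt0 r0 (pnorm_gt0 v0)) hD.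
have hp' : pnorm p < (cb - cv) / D := hp.
apply: le_trans (pdot_le_pnorm p v) _.
apply: le_trans (_ : (cb - cv) / D * pnorm v <= _).
  by rewrite ler_wpM2r ?pnorm_ge0 // ltW.
rewrite mulrAC -mulrA; apply: ler_wpM2l; first by rewrite subr_ge0 ltW.
by rewrite ler_pdivrMr // -(ler_pM2l r0) mulrA mulfV ?gt_eqF // mul1r.
Qed.

Lemma hsubdiff_interior_lt p xi : interior (hsubdiff Om V a0) p ->
  hplane a0 xi -> xi <> a0 -> V a0 + hpair p xi a0 < V xi.
Proof.
move=> /nbhs_ballP[e e0 He] hxi /eqP ne.
have v0 : hcoord a0 xi != 0 by rewrite -(hchart_eq_center a0) hcoordK.
rewrite (slicing_cone_hplane hxi); last exact/eqP.
rewrite hpairE ltrD2l; set v := hcoord a0 xi in v0 *.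
have r0 := rho_gt0 v0; have nv : 0 < `|v| by rewrite normr_gt0.
set d := e / (2 * `|v|).
have d0 : 0 < d by rewrite divr_gt0 // mulr_gt0.
have : hsubdiff Om V a0 (p + d *: v).
  apply: He; rewrite -ball_normE /= opprD addrA subrr sub0r normrN normrZ gtr0_norm //.
  by rewrite /d invfM mulrA mulfVK ?gt_eqF // ltr_pdivrMr // ltr_pMr ?ltr1n.
(* Test the subgradient [p + d v] at the point halfway to the boundary along [v]. *)
have half : 0 < rho v / 2 by rewrite divr_gt0.
have Gh : G0 (hchart (rho v / 2 *: v)).
  rewrite hchartZ; apply: lt_radial => //; [exact: ray_bounded | exact: ltW |].
  by rewrite -/(rho v) ltr_pdivrMr // ltr_pMr ?ltr1n.
move/(_ _ (G0Om Gh) (hplane_hchart _ _)).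
rewrite slicing_cone_center slicing_cone_hchart // hpairE hchartK pdotZr pdotDl pdotZl.
have -> : (cb - cv) * (rho v / 2 / rho v) = rho v / 2 * ((cb - cv) / rho v).
  by field; rewrite gt_eqF.
rewrite lerD2l ler_pM2l // => H.
have : 0 < d * pdot v v by rewrite mulr_gt0 // -sqr_pnorm exprn_gt0 // pnorm_gt0.
lra.
Qed.

End SlicingCone.

Theorem proposition3p3 (R : realType) (n : nat)
  (Om G0 : set (hpt R n)) (xi0 : hpt R n) (cv cb : R) :
  open Om -> horiz_bounded Om ->
  open G0 -> econvex G0 -> G0 `<=` Om -> G0 xi0 ->
  cv < cb -> cb <= 0 ->
  let V := slicing_cone G0 xi0 cv cb in
  let r0 := (cb - cv) / diamH (G0 `&` hplane xi0) in
  ball2n (n:=n) r0 `<=` hsubdiff Om V xi0 /\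
  (forall p, interior (hsubdiff Om V xi0) p ->
     forall xi, (closure G0 `&` hplane xi0) xi -> xi <> xi0 ->
       V xi0 + hpair p xi xi0 < V xi).
Proof.
move=> _ hbOm oG0 cG0 G0Om G0xi0 cvb cb0 V r0.
have cv0 : cv != 0 by rewrite lt_eqF // (lt_le_trans cvb cb0).
split; first exact: ball_sub_hsubdiff.
move=> p pint xi [_ hxi].
exact: (hsubdiff_interior_lt oG0 cG0 G0Om G0xi0 hbOm cv0 pint hxi).
Qed.
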